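(* Let $\Theta$ be a variety of universal algebras of a fixed signature, let $H_1,H_2$ be $\Theta$-algebras, and let $\bar a=(a_1,\dots,a_n)$ and $\bar b=(b_1,\dots,b_n)$ be $n$-tuples of elements of $H_1$ and $H_2$ respectively. Let $X=\{x_1,\dots,x_n\}$ and let $\nu:W(X)\to H_1$, $\mu:W(X)\to H_2$ be the homomorphisms with $\nu(x_i)=a_i$ and $\mu(x_i)=b_i$ for $i=1,\dots,n$. Then $LKer(\nu)=LKer(\mu)$ if and only if $tp^{H_1}(\bar a)=tp^{H_2}(\bar b)$.
   Context: $X^0=\{x_1,x_2,\dots\}$ is an infinite set of variables; for a finite $X\subset X^0$, $W(X)$ denotes the free $\Theta$-algebra on $X$. A homomorphism $\mu:W(X)\to H$ is called a point. For each finite $X\subset X^0$ the set $\Phi(X)$ of formulas of sort $X$ is defined inductively: (1) every equality $w\equiv w'$ with $w,w'\in W(X)$ is in $\Phi(X)$; (2) if $u,u_1,u_2\in\Phi(X)$ and $x\in X$, then $\neg u$, $\exists x\,u$, $u_1\vee u_2$, $u_1\wedge u_2$ are in $\Phi(X)$; (3) if $s:W(X)\to W(Y)$ is a homomorphism ($Y\subset X^0$ finite) and $u\in\Phi(X)$, then $s_*u\in\Phi(Y)$. The value $Val^X_H(u)\subseteq \mathrm{Hom}(W(X),H)$ is defined by: $Val^X_H(w\equiv w')=\{\mu:\mu(w)=\mu(w')\}$; $\mu\in Val^X_H(\exists x\,u)$ iff there is a point $\nu:W(X)\to H$ agreeing with $\mu$ on $X\setminus\{x\}$ with $\nu\in Val^X_H(u)$;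 $\vee,\wedge,\neg$ are interpreted as union, intersection and complement in $\mathrm{Hom}(W(X),H)$; for $s:W(X)\to W(Y)$, $\mu\in Val^Y_H(s_*u)$ iff $\mu\circ s\in Val^X_H(u)$. The logical kernel of a point $\mu:W(X)\to H$ is $LKer(\mu)=\{u\in\Phi(X):\mu\in Val^X_H(u)\}$. The (model-theoretic) type $tp^{H}(\bar a)$ of an $n$-tuple $\bar a$ in $H$ is the set of all first-order formulas $u(x_1,\dots,x_n)$ of the first-order language with equality of the signature of $\Theta$, whose free variables are among $x_1,\dots,x_n$ (all other variables bound), such that $H\models u(a_1,\dots,a_n)$. *)

From mathcomp Require Import all_boot.
Set Implicit Arguments. Unset Strict Implicit. Unset Printing Implicit Defensive.

Record signature := Signature { sym : Type ; arity : sym -> nat }.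

Inductive term (S : signature) (V : Type) : Type :=
| Var : V -> term S V
| Op (f : sym S) : ('I_(arity f) -> term S V) -> term S V.
Arguments Var {S V}. Arguments Op {S V}.

Record algebra (S : signature) := Algebra {
  carrier :> Type ;
  ops : forall f : sym S, ('I_(arity f) -> carrier) -> carrier }.

Fixpoint eval (S : signature) (A : algebra S) (V : Type) (e : V -> A) (t : term S V) : A :=
  match t with
  | Var v => e v
  | Op f args => @ops S A f (fun i => eval e (args i))
  end.

(* A variety Theta is given by a set of identities l = r (terms in variables nat);
   a Theta-algebra is an algebra satisfying all of them. *)
Definition identities (S : signature) := term S nat -> term S nat -> Prop.
Definition is_Theta_algebra (S : signature) (Th : identities S) (A : algebra S) : Prop :=
  forall l r, Th l r -> forall e : nat -> A, eval e l = eval e r.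

(* Sorts: finite sets X of variables x_k (k : nat), given as seq nat. *)
Definition var (X : seq nat) := {x : nat | x \in X}.

(* Elements of W(X) are represented by terms over X (representatives of their
   Theta-classes); homomorphisms W(X) -> W(Y) by their values on generators;
   points W(X) -> H by their values on generators. *)
Inductive form (S : signature) : seq nat -> Type :=
| FEq (X : seq nat) : term S (var X) -> term S (var X) -> form S X
| FNeg (X : seq nat) : form S X -> form S X
| FEx (X : seq nat) (x : nat) : x \in X -> form S X -> form S X
| FOr (X : seq nat) : form S X -> form S X -> form S X
| FAnd (X : seq nat) : form S X -> form S X -> form S X
| FSub (X Y : seq nat) : (var X -> term S (var Y)) -> form S X -> form S Y.

Fixpoint Val (S : signature) (H : algebra S) (X : seq nat) (u : form S X)
  : (var X -> H) -> Prop :=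
  match u in form _ X0 return (var X0 -> H) -> Prop with
  | FEq _ w w' => fun mu => eval mu w = eval mu w'
  | FNeg _ u1 => fun mu => ~ @Val S H _ u1 mu
  | FEx X0 x _ u1 => fun mu =>
      exists nu : var X0 -> H, (forall v : var X0, sval v <> x -> nu v = mu v) /\ @Val S H _ u1 nu
  | FOr _ u1 u2 => fun mu => @Val S H _ u1 mu \/ @Val S H _ u2 mu
  | FAnd _ u1 u2 => fun mu => @Val S H _ u1 mu /\ @Val S H _ u2 mu
  | FSub _ _ s u1 => fun mu => @Val S H _ u1 (fun v => eval mu (s v))
  end.

Definition LKer (S : signature) (H : algebra S) (X : seq nat) (mu : var X -> H)
  : form S X -> Prop := fun u => @Val S H X u mu.

(* First-order formulas with equality of signature S; variable x_k is k. *)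
Inductive fo (S : signature) : Type :=
| FOEq : term S nat -> term S nat -> fo S
| FONeg : fo S -> fo S
| FOAnd : fo S -> fo S -> fo S
| FOOr : fo S -> fo S -> fo S
| FOImp : fo S -> fo S -> fo S
| FOEx : nat -> fo S -> fo S
| FOAll : nat -> fo S -> fo S.

Fixpoint occurs (S : signature) (x : nat) (t : term S nat) : Prop :=
  match t with
  | Var y => x = y
  | Op f args => exists i, occurs x (args i)
  end.

Fixpoint free_in (S : signature) (x : nat) (u : fo S) : Prop :=
  match u with
  | FOEq t1 t2 => occurs x t1 \/ occurs x t2
  | FONeg u1 => free_in x u1
  | FOAnd u1 u2 | FOOr u1 u2 | FOImp u1 u2 => free_in x u1 \/ free_in x u2
  | FOEx y u1 | FOAll y u1 => x <> y /\ free_in x u1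
  end.

Definition upd (A : Type) (e : nat -> A) (x : nat) (c : A) : nat -> A :=
  fun k => if k == x then c else e k.

Fixpoint sat (S : signature) (H : algebra S) (e : nat -> H) (u : fo S) : Prop :=
  match u with
  | FOEq t1 t2 => eval e t1 = eval e t2
  | FONeg u1 => ~ @sat S H e u1
  | FOAnd u1 u2 => @sat S H e u1 /\ @sat S H e u2
  | FOOr u1 u2 => @sat S H e u1 \/ @sat S H e u2
  | FOImp u1 u2 => @sat S H e u1 -> @sat S H e u2
  | FOEx y u1 => exists c : H, @sat S H (upd e y c) u1
  | FOAll y u1 => forall c : H, @sat S H (upd e y c) u1
  end.

(* Assignment x_k |-> a_k (k = 1..n) for a tuple a : 'I_n -> H (a_k is a (k-1));
   other variables get the default d (irrelevant for the formulas considered). *)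
Definition tenv (H : Type) (n : nat) (a : 'I_n -> H) (d : H) (k : nat) : H :=
  if (0 < k) then odflt d (omap a (insub k.-1)) else d.

Definition tp (S : signature) (H : algebra S) (n : nat) (a : 'I_n -> H) (d : H)
  : fo S -> Prop :=
  fun u => (forall x, free_in x u -> 0 < x <= n) /\ @sat S H (tenv a d) u.

Definition Xn (n : nat) : seq nat := iota 1 n.

Definition tpoint (H : Type) (n : nat) (a : 'I_n -> H) (d : H) : var (Xn n) -> H :=
  fun v => tenv a d (sval v).

From mathcomp Require Import all_boot.
From Stdlib Require Import Classical FunctionalExtensionality PropExtensionality.
Set Implicit Arguments. Unset Strict Implicit.

(* Both kinds of formulas translate into each other, uniformly in the algebra
   and in the tuple.  A formula u of sort X becomes a first-order formula by
   substituting first-order terms for the variables of X; an existential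
   quantifier of sort X binds a fresh first-order variable.  Conversely a
   first-order formula is read as a formula of a sort Y containing all its
   variables, which is then substituted back into X = {x_1, ..., x_n}. *)

Section Translations.
Variable S : signature.

Fixpoint tsubst (V W : Type) (sg : V -> term S W) (t : term S V) : term S W :=
  match t with
  | Var v => sg v
  | Op f args => Op f (fun i => tsubst sg (args i))
  end.

Lemma eval_tsubst (H : algebra S) V W (sg : V -> term S W) (e : W -> H) t :
  eval e (tsubst sg t) = eval (fun v => eval e (sg v)) t.
Proof.
elim: t => [v|f args IH] //=.
by congr (ops _); apply: functional_extensionality => i.
Qed.

Lemma occurs_tsubst V (sg : V -> term S nat) t x :
  occurs x (tsubst sg t) -> exists v, occurs x (sg v).
Proof. by elim: t => [v|f args IH] /=; [exists v | case=> i /IH]. Qed.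

Lemma eq_eval (H : algebra S) (e e' : nat -> H) t :
  (forall x, occurs x t -> e x = e' x) -> eval e t = eval e' t.
Proof.
elim: t => [v|f args IH] /= eq_e; first exact: eq_e.
congr (ops _); apply: functional_extensionality => i.
by apply: IH => x x_t; apply: eq_e; exists i.
Qed.

Lemma eq_sat (H : algebra S) u : forall (e e' : nat -> H),
  (forall x, free_in x u -> e x = e' x) -> (sat e u <-> sat e' u).
Proof.
have eq_upd (e e' : nat -> H) (y : nat) (c : H) (u1 : fo S) :
    (forall x, x <> y /\ free_in x u1 -> e x = e' x) ->
    forall x, free_in x u1 -> upd e y c x = upd e' y c x.
  by move=> eq_e x x_u1; rewrite /upd; case: eqP => // x_ne_y; apply: eq_e.
elim: u => /= [t1 t2|u IH|u1 IH1 u2 IH2|u1 IH1 u2 IH2|u1 IH1 u2 IH2|y u IH|y u IH]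
  e e' eq_e.
- by rewrite (@eq_eval _ e e' t1) ?(@eq_eval _ e e' t2) // => x x_t; apply: eq_e; auto.
- by rewrite (IH e e').
- by rewrite (IH1 e e') ?(IH2 e e') // => x x_u; apply: eq_e; auto.
- by rewrite (IH1 e e') ?(IH2 e e') // => x x_u; apply: eq_e; auto.
- by rewrite (IH1 e e') ?(IH2 e e') // => x x_u; apply: eq_e; auto.
- by split=> -[c sat_c]; exists c; move: sat_c; rewrite (IH _ _ (eq_upd _ _ y c u eq_e)).
- by split=> sat_c c; move: (sat_c c); rewrite (IH _ _ (eq_upd _ _ y c u eq_e)).
Qed.

(* [k] is a variable above every variable occurring in the range of [sg]. *)
Fixpoint fo_of_form (X : seq nat) (u : form S X) {struct u}
  : (var X -> term S nat) -> nat -> fo S :=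
  match u in form _ X0 return (var X0 -> term S nat) -> nat -> fo S with
  | FEq _ w w' => fun sg k => FOEq (tsubst sg w) (tsubst sg w')
  | FNeg _ u1 => fun sg k => FONeg (fo_of_form u1 sg k)
  | FEx X0 x _ u1 => fun sg k =>
      FOEx k (fo_of_form u1 (fun v : var X0 => if val v == x then Var k else sg v) k.+1)
  | FOr _ u1 u2 => fun sg k => FOOr (fo_of_form u1 sg k) (fo_of_form u2 sg k)
  | FAnd _ u1 u2 => fun sg k => FOAnd (fo_of_form u1 sg k) (fo_of_form u2 sg k)
  | FSub _ _ s u1 => fun sg k => fo_of_form u1 (fun v => tsubst sg (s v)) k
  end.

Lemma free_fo_of_form X (u : form S X) sg k x :
  free_in x (fo_of_form u sg k) -> exists v, occurs x (sg v).
Proof.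
elim: X / u sg k => /= [X w w'|X u IH|X y _ u IH|X u1 IH1 u2 IH2|X u1 IH1 u2 IH2|X Y s u IH]
  sg k.
- by case=> /occurs_tsubst.
- exact: IH.
- case=> x_neq_k /IH [v]; case: eqP => _ /=; last by exists v.
  by move=> x_eq_k; case: x_neq_k.
- by case=> [/IH1|/IH2].
- by case=> [/IH1|/IH2].
- by case/IH=> v /occurs_tsubst.
Qed.

Lemma sat_fo_of_form (H : algebra S) X (u : form S X) sg k (e : nat -> H) :
  (forall v x, occurs x (sg v) -> x < k) ->
  (sat e (fo_of_form u sg k) <-> Val u (fun v => eval e (sg v))).
Proof.
elim: X / u sg k e => /= [X w w'|X u IH|X y y_X u IH|X u1 IH1 u2 IH2|X u1 IH1 u2 IH2|X Y s u IH]
  sg k e sg_lt_k.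
- by rewrite !eval_tsubst.
- by rewrite IH.
- pose sgy v := if val v == y then Var k else sg v.
  have sgy_lt_k1 v x : occurs x (sgy v) -> x < k.+1.
    rewrite /sgy; case: eqP => _ /=; first by move=> ->.
    by move/sg_lt_k/ltnW.
  have eval_sgy c v :
      eval (upd e k c) (sgy v) = if val v == y then c else eval e (sg v).
    rewrite /sgy; case: eqP => _ /=; first by rewrite /upd eqxx.
    apply: eq_eval => x x_sg; rewrite /upd; case: eqP => // x_eq_k.
    by move: (sg_lt_k v x x_sg); rewrite x_eq_k ltnn.
  split.
  + case=> c; rewrite IH // => Val_c.
    exists (fun v => if val v == y then c else eval e (sg v)); split.
      by move=> v /eqP/negbTE ->.
    by move: Val_c; congr (Val _ _); apply: functional_extensionality => v; rewrite eval_sgy.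
  + case=> nu [nu_agree Val_nu]; exists (nu (exist _ y y_X)); rewrite IH //.
    move: Val_nu; congr (Val _ _); apply: functional_extensionality => v.
    rewrite eval_sgy; case: eqP => [v_eq_y|/nu_agree //].
    by congr nu; apply: val_inj.
- by rewrite IH1 // IH2.
- by rewrite IH1 // IH2.
- rewrite IH; last by move=> v x /occurs_tsubst [w /sg_lt_k].
  suff -> : (fun v => eval e (tsubst sg (s v)))
          = (fun v => eval (fun w => eval e (sg w)) (s v)) by [].
  by apply: functional_extensionality => v; rewrite eval_tsubst.
Qed.

Fixpoint term_bound (t : term S nat) : nat :=
  match t with
  | Var k => k
  | Op f args => \max_(i < arity f) term_bound (args i)
  end.

Lemma occurs_term_bound t x : occurs x t -> x <= term_bound t.
Proof.
elim: t => [v ->|f args IH [i /IH x_le]] //=.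
exact: leq_trans x_le (leq_bigmax i).
Qed.

Fixpoint fo_bound (u : fo S) : nat :=
  match u with
  | FOEq t1 t2 => maxn (term_bound t1) (term_bound t2)
  | FONeg u1 => fo_bound u1
  | FOAnd u1 u2 | FOOr u1 u2 | FOImp u1 u2 => maxn (fo_bound u1) (fo_bound u2)
  | FOEx y u1 | FOAll y u1 => maxn y (fo_bound u1)
  end.

Lemma bounded_maxl (P : nat -> Prop) m n :
  (forall k, k <= maxn m n -> P k) -> forall k, k <= m -> P k.
Proof. by move=> bounded k k_le; apply: bounded; rewrite leq_max k_le. Qed.

Lemma bounded_maxr (P : nat -> Prop) m n :
  (forall k, k <= maxn m n -> P k) -> forall k, k <= n -> P k.
Proof. by move=> bounded k k_le; apply: bounded; rewrite leq_max k_le orbT. Qed.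

Section FormOfFo.
Variables (Y : seq nat) (d : var Y).

(* [d] is a junk value for variables outside [Y]; the translation is only
   meaningful when [Y] contains every variable of the first-order formula. *)
Definition term_of_fo_term (t : term S nat) : term S (var Y) :=
  tsubst (fun k => Var (insubd d k)) t.

Definition form_exists (y : nat) (p : form S Y) : form S Y :=
  @FEx S Y (val (insubd d y)) (valP (insubd d y)) p.

Fixpoint form_of_fo (u : fo S) : form S Y :=
  match u with
  | FOEq t1 t2 => FEq (term_of_fo_term t1) (term_of_fo_term t2)
  | FONeg u1 => FNeg (form_of_fo u1)
  | FOAnd u1 u2 => FAnd (form_of_fo u1) (form_of_fo u2)
  | FOOr u1 u2 => FOr (form_of_fo u1) (form_of_fo u2)
  | FOImp u1 u2 => FOr (FNeg (form_of_fo u1)) (form_of_fo u2)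
  | FOEx y u1 => form_exists y (form_of_fo u1)
  | FOAll y u1 => FNeg (form_exists y (FNeg (form_of_fo u1)))
  end.

Lemma Val_form_exists (H : algebra S) y (p : form S Y) (e : nat -> H) :
  y \in Y ->
  Val (form_exists y p) (fun v => e (val v))
  <-> exists c, Val p (fun v => upd e y c (val v)).
Proof.
rewrite /= val_insubd => ->; split.
- case=> nu [nu_agree Val_nu]; exists (nu (insubd d y)); move: Val_nu.
  congr (Val _ _); apply: functional_extensionality => v; rewrite /upd.
  case: eqP => [v_eq_y|/nu_agree //].
  by congr nu; apply: val_inj; rewrite val_insubd -v_eq_y (valP v).
- case=> c Val_c; exists (fun v => upd e y c (val v)); split => // v.
  by rewrite /upd; case: eqP.
Qed.

Lemma Val_form_of_fo (H : algebra S) u (e : nat -> H) :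
  (forall k, k <= fo_bound u -> k \in Y) ->
  (Val (form_of_fo u) (fun v => e (val v)) <-> sat e u).
Proof.
elim: u e => /= [t1 t2|u IH|u1 IH1 u2 IH2|u1 IH1 u2 IH2|u1 IH1 u2 IH2|y u IH|y u IH]
  e bound_Y.
- have eval_term t : (forall k, k <= term_bound t -> k \in Y) ->
      eval (fun v => e (val v)) (term_of_fo_term t) = eval e t.
    move=> t_bound; rewrite eval_tsubst; apply: eq_eval => x /occurs_term_bound x_le.
    by rewrite /= val_insubd t_bound.
  by rewrite !eval_term //; [apply: bounded_maxr bound_Y | apply: bounded_maxl bound_Y].
- by rewrite IH.
- by rewrite IH1 ?IH2 //; [apply: bounded_maxr bound_Y | apply: bounded_maxl bound_Y].
- by rewrite IH1 ?IH2 //; [apply: bounded_maxr bound_Y | apply: bounded_maxl bound_Y].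
- rewrite IH1 ?IH2; [|apply: bounded_maxr bound_Y | apply: bounded_maxl bound_Y].
  split=> [[not_sat1 /not_sat1 [] | sat2 _] // | imp].
  by case: (classic (sat e u1)) => [/imp|]; [right|left].
- have y_Y : y \in Y by apply: bound_Y; rewrite leq_maxl.
  apply: iff_trans (@Val_form_exists H y (form_of_fo u) e y_Y) _.
  by split=> -[c sat_c]; exists c; move: sat_c; rewrite IH //; apply: bounded_maxr bound_Y.
- have y_Y : y \in Y by apply: bound_Y; rewrite leq_maxl.
  have := @Val_form_exists H y (FNeg (form_of_fo u)) e y_Y; rewrite /= => ->.
  have {}IH c := IH (upd e y c) (bounded_maxr bound_Y).
  split.
  + by move=> no_cex c; apply: NNPP => not_c; apply: no_cex; exists c; rewrite IH.
  + by move=> all_c [c]; rewrite IH.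
Qed.

End FormOfFo.

Lemma mem_Xn n x : (x \in Xn n) = (0 < x <= n).
Proof. by rewrite /Xn mem_iota add1n ltnS. Qed.

Lemma fo_definable_by_form n (u : fo S) :
  0 < n -> (forall x, free_in x u -> 0 < x <= n) ->
  exists u' : form S (Xn n), forall (H : algebra S) (c : 'I_n -> H) (c0 : H),
    sat (tenv c c0) u <-> Val u' (tpoint c c0).
Proof.
move=> n_gt0 free_u.
have x1 : var (Xn n) by exists 1; rewrite mem_Xn n_gt0.
pose Y := iota 0 (fo_bound u).+1.
have bound_Y k : k <= fo_bound u -> k \in Y by rewrite mem_iota.
have y0 : var Y by exists 0; rewrite bound_Y.
exists (FSub (fun v : var Y => Var (insubd x1 (val v))) (form_of_fo y0 u)) => H c c0 /=.
rewrite (Val_form_of_fo y0 (fun k => tenv c c0 (val (insubd x1 k))) bound_Y).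
by apply: eq_sat => x /free_u x_n; rewrite val_insubd mem_Xn x_n.
Qed.

Lemma form_definable_by_fo n (u : form S (Xn n)) :
  exists u' : fo S, (forall x, free_in x u' -> 0 < x <= n) /\
    forall (H : algebra S) (c : 'I_n -> H) (c0 : H),
      Val u (tpoint c c0) <-> sat (tenv c c0) u'.
Proof.
exists (fo_of_form u (fun v => Var (val v)) n.+1); split.
  by move=> x /free_fo_of_form [v /= ->]; rewrite -mem_Xn (valP v).
move=> H c c0; rewrite sat_fo_of_form // => v x /= ->.
by have := valP v; rewrite mem_Xn ltnS => /andP[].
Qed.

End Translations.

Theorem mainTheorem1 (S : signature) (Th : identities S)
  (H1 H2 : algebra S) (hH1 : is_Theta_algebra Th H1) (hH2 : is_Theta_algebra Th H2)
  (n : nat) (hn : 0 < n) (a : 'I_n -> H1) (b : 'I_n -> H2) :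
  let a0 := a (Ordinal hn) in
  let b0 := b (Ordinal hn) in
  LKer (tpoint a a0) = LKer (tpoint b b0) <-> tp a a0 = tp b b0.
Proof.
move=> a0 b0; split=> same; apply: functional_extensionality => u;
  apply: propositional_extensionality.
- have same_Val w : Val w (tpoint a a0) = Val w (tpoint b b0).
    by rewrite -[LHS]/(LKer _ w) same.
  split=> -[free_u sat_u]; split=> //; have [u' u'_def] := fo_definable_by_form hn free_u;
    by move: sat_u; rewrite !u'_def same_Val.
- have [u' [free_u' u'_def]] := form_definable_by_fo u.
  have same_sat : (_ /\ _) = (_ /\ _) := f_equal (fun P => P u') same.
  rewrite /LKer !u'_def; split=> sat_u'; have := conj free_u' sat_u';
    by [rewrite same_sat => -[] | rewrite -same_sat => -[]].
Qed.
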